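(* Let $G$ be a simple graph with at least one edge on $n=pq$ vertices labelled $u_iw_j$ ($i\in\{1,\dots,p\}$, $j\in\{1,\dots,q\}$). If the density matrix $\rho(G)$ is separable in $\mathbb{C}^p_A\otimes\mathbb{C}^q_B$, then $\Delta(G)=\Delta(G^{\Gamma_B})$.
   Context: For a simple graph $G=(V,E)$ on vertices $v_1,\dots,v_n$: $M(G)$ is the adjacency matrix, $\Delta(G)$ the diagonal degree matrix ($(i,i)$ entry = degree of $v_i$), $L(G)=\Delta(G)-M(G)$ the Laplacian, and the density matrix of $G$ is $\rho(G)=\frac{1}{2|E|}L(G)$ (defined when $|E|\ge1$). When $n=pq$, the vertices are labelled as ordered pairs $u_iw_j$ ($1\le i\le p$, $1\le j\le q$), and vertex $u_iw_j$ is identified with the basis vector $|u_i\rangle\otimes|w_j\rangle$, where $\{|u_i\rangle\}$ and $\{|w_j\rangle\}$ are orthonormal bases of $\mathbb{C}^p_A$ and $\mathbb{C}^q_B$; matrices indexed by vertices are thus operators on $\mathbb{C}^p_A\otimes\mathbb{C}^q_B$. The partial transpose of $G$ is the graph $G^{\Gamma_B}=(V,E')$ with $\{u_iw_j,u_kw_l\}\in E'$ iff $\{u_iw_l,u_kw_j\}\in E$. A density matrix on $\mathbb{C}^p_A\otimes\mathbb{C}^q_B$ is separable if it is a convex combination of product states $|a\rangle\langle a|\otimes|b\rangle\langle b|$. *)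

(* Complex numbers are R[i] = complex R for R : realType
   (any realType is the real field, so R[i] is C). *)
From HB Require Import structures.
From mathcomp Require Import all_boot all_order all_algebra.
From mathcomp Require Import reals complex.
Set Implicit Arguments. Unset Strict Implicit. Unset Printing Implicit Defensive.
Import Order.TTheory GRing.Theory Num.Theory.
Local Open Scope ring_scope.

(* Vertex u_i w_j is the pair (i, j) : 'I_p * 'I_q; it is identified with the
   basis vector |u_i> (x) |w_j> of C^p (x) C^q, so an operator on
   C^p (x) C^q is a matrix indexed by vertices: a function V -> V -> C. *)
Definition vtx (p q : nat) := ('I_p * 'I_q)%type.
Definition op (C : Type) (p q : nat) := vtx p q -> vtx p q -> C.

Definition simple_graph (p q : nat) (e : rel (vtx p q)) : Prop :=
  symmetric e /\ irreflexive e.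

Definition nedges (p q : nat) (e : rel (vtx p q)) : nat :=
  (#|[set uv : vtx p q * vtx p q | e uv.1 uv.2]|)./2.

Definition deg (p q : nat) (e : rel (vtx p q)) (v : vtx p q) : nat :=
  #|[set w | e v w]|.

Definition adjm (C : nzRingType) (p q : nat) (e : rel (vtx p q)) : op C p q :=
  fun x y => (e x y)%:R.
Definition degm (C : nzRingType) (p q : nat) (e : rel (vtx p q)) : op C p q :=
  fun x y => if x == y then (deg e x)%:R else 0.
Definition lapm (C : nzRingType) (p q : nat) (e : rel (vtx p q)) : op C p q :=
  fun x y => degm C e x y - adjm C e x y.

Definition density (C : fieldType) (p q : nat) (e : rel (vtx p q)) : op C p q :=
  fun x y => ((2 * nedges e)%:R)^-1 * lapm C e x y.

Definition ptrans (p q : nat) (e : rel (vtx p q)) : rel (vtx p q) :=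
  fun x y => e (x.1, y.2) (y.1, x.2).

Definition prod_state (R : rcfType) (p q : nat)
    (a : 'I_p -> R[i]) (b : 'I_q -> R[i]) : op R[i] p q :=
  fun x y => (a x.1 * (a y.1)^*) * (b x.2 * (b y.2)^*).

Definition separable (R : rcfType) (p q : nat) (rho : op R[i] p q) : Prop :=
  exists (m : nat) (lam : 'I_m -> R) (a : 'I_m -> 'I_p -> R[i])
         (b : 'I_m -> 'I_q -> R[i]),
    [/\ forall k, 0 <= lam k,
        \sum_(k < m) lam k = 1,
        forall k, \sum_(i < p) a k i * (a k i)^* = 1,
        forall k, \sum_(j < q) b k j * (b k j)^* = 1 &
        forall x y, rho x y = \sum_(k < m) (lam k)%:C%C * prod_state (a k) (b k) x y].

(* The Laplacian has zero row sums, so the all-ones vector |1> = |1_A> (x) |1_B>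
   satisfies <1|rho(G)|1> = 0.  For a product state this expectation is
   |<1_A|a>|^2 |<1_B|b>|^2 >= 0, so in a separable decomposition every state of
   positive weight has <1_A|a> = 0 or <1_B|b> = 0.  The partial transpose of
   |a><a| (x) |b><b| has row sums proportional to <a|1_A><1_B|b>, so the partial
   transpose of rho(G) has zero row sums.  But that row sum at x is
   (deg_G x - deg_{G^Gamma_B} x) / (2|E|). *)
From HB Require Import structures.
From mathcomp Require Import all_boot all_order all_algebra.
From mathcomp Require Import reals complex ring.
From Stdlib Require Import FunctionalExtensionality.
Import Order.TTheory GRing.Theory Num.Theory.
Local Open Scope ring_scope.

Lemma natr_deg (C : nzRingType) (p q : nat) (e : rel (vtx p q)) (x : vtx p q) :
  (deg e x)%:R = \sum_y ((e x y)%:R : C).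
Proof.
rewrite /deg -natr_sum; congr (_ %:R).
rewrite cardsE -sum1_card big_mkcond /=.
by apply: eq_bigr => y _; rewrite unfold_in; case: (e x y).
Qed.

Section GraphLaplacian.

Variables (C : nzRingType) (p q : nat) (e : rel (vtx p q)).

Lemma lapm_row_sum0 (x : vtx p q) : \sum_y lapm C e x y = 0.
Proof.
rewrite /lapm sumrB (bigD1 x) //= /degm eqxx big1 ?addr0.
  by rewrite /adjm -natr_deg subrr.
by move=> y /negbTE; rewrite eq_sym => ->.
Qed.

Lemma lapm_ptrans_row_sum (x : vtx p q) :
  \sum_(y : vtx p q) lapm C e (x.1, y.2) (y.1, x.2)
    = (deg e x)%:R - (deg (ptrans e) x)%:R.
Proof.
rewrite /lapm sumrB; congr (_ - _); last by rewrite natr_deg.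
rewrite (bigD1 x) //= /degm -surjective_pairing eqxx big1 ?addr0 //.
move=> [y1 y2] ynx; case: eqP => //= -[x1E y2E].
by move: ynx; rewrite -x1E y2E -surjective_pairing eqxx.
Qed.

End GraphLaplacian.

Lemma nedges_gt0 {p q : nat} {e : rel (vtx p q)} {x y : vtx p q} :
  irreflexive e -> symmetric e -> e x y -> (0 < nedges e)%N.
Proof.
move=> eirr esym exy; rewrite /nedges half_gt0.
have xny : x != y by apply: contraTneq exy => ->; rewrite eirr.
have xy_yx : (x, y) != (y, x) by rewrite xpair_eqE (negbTE xny).
apply: leq_trans (subset_leq_card (_ : [set (x, y); (y, x)] \subset _)).
  by rewrite cards2 xy_yx.
by apply/subsetP => uv; rewrite !inE => /orP [] /eqP -> /=; rewrite // esym.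
Qed.

Lemma sum_pairM (R : pzSemiRingType) (I J : finType) (f : I -> R) (g : J -> R) :
  \sum_(x : I * J) f x.1 * g x.2 = (\sum_i f i) * (\sum_j g j).
Proof. by rewrite big_distrlr pair_bigA. Qed.

Section ProductStates.

Variables (R : rcfType) (p q : nat).
Implicit Types (a : 'I_p -> R[i]) (b : 'I_q -> R[i]).

Lemma sum_prod_state a b :
  \sum_x \sum_y prod_state a b x y
    = ((\sum_i a i) * (\sum_j b j)) * ((\sum_i a i) * (\sum_j b j))^*.
Proof.
rewrite -sum_pairM rmorph_sum big_distrlr /=.
apply: eq_bigr => x _; apply: eq_bigr => y _.
by rewrite /prod_state rmorphM /=; ring.
Qed.

Lemma prod_state_ptrans_row_sum a b (x : vtx p q) :
  \sum_(y : vtx p q) prod_state a b (x.1, y.2) (y.1, x.2)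
    = a x.1 * (b x.2)^* * ((\sum_i a i)^* * \sum_j b j).
Proof.
rewrite rmorph_sum -sum_pairM big_distrr /=.
by apply: eq_bigr => y _; rewrite /prod_state /=; ring.
Qed.

Lemma separable_ptrans_row_sum0 (rho : op R[i] p q) :
  separable rho -> \sum_x \sum_y rho x y = 0 ->
  forall x, \sum_(y : vtx p q) rho (x.1, y.2) (y.1, x.2) = 0.
Proof.
move=> [m [lam [a [b [lam_ge0 _ _ _ rhoE]]]]] rho_sum0 x.
pose A k := \sum_i a k i; pose B k := \sum_j b k j.
have rho_sumE : \sum_x \sum_y rho x y
    = \sum_(k < m) (lam k)%:C%C * ((A k * B k) * (A k * B k)^*).
  under eq_bigr => x' _ do under eq_bigr => y _ do rewrite rhoE.
  under eq_bigr => x' _ do rewrite exchange_big /=.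
  rewrite exchange_big /=; apply: eq_bigr => k _.
  rewrite -sum_prod_state big_distrr /=; apply: eq_bigr => x' _.
  by rewrite big_distrr.
have term0 k : (lam k)%:C%C * ((A k * B k) * (A k * B k)^*) = 0.
  apply: (psumr_eq0P _ (etrans (esym rho_sumE) rho_sum0)) => // j _.
  by apply: mulr_ge0; [rewrite ler0c lam_ge0 | apply: mul_conjC_ge0].
have weighted_overlap0 k : (lam k)%:C%C * ((A k)^* * B k) = 0.
  move/eqP: (term0 k); rewrite mulf_eq0 mul_conjC_eq0 mulf_eq0.
  by case/orP=> [|/orP []] /eqP ->; rewrite ?conjC0 ?(mul0r, mulr0).
under eq_bigr => y _ do rewrite rhoE.
rewrite exchange_big /=; apply: big1 => k _.
by rewrite -big_distrr /= prod_state_ptrans_row_sum mulrCA weighted_overlap0 mulr0.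
Qed.

End ProductStates.

Arguments separable_ptrans_row_sum0 {R p q rho}.

Section Density.

Variables (C : fieldType) (p q : nat) (e : rel (vtx p q)).

Lemma density_sum0 : \sum_x \sum_y density C e x y = 0.
Proof. by apply: big1 => x _; rewrite -big_distrr /= lapm_row_sum0 mulr0. Qed.

Lemma density_ptrans_row_sum (x : vtx p q) :
  \sum_(y : vtx p q) density C e (x.1, y.2) (y.1, x.2)
    = ((2 * nedges e)%:R)^-1 * ((deg e x)%:R - (deg (ptrans e) x)%:R).
Proof. by rewrite -lapm_ptrans_row_sum big_distrr. Qed.

End Density.

Theorem theorem2 (R : realType) (p q : nat) (e : rel (vtx p q)) :
  simple_graph e ->
  (exists x y, e x y) ->
  separable (density R[i] e) ->
  degm R[i] e = degm R[i] (ptrans e).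
Proof.
move=> [esym eirr] [x0 [y0 exy]] rho_sep.
have c_neq0 : ((2 * nedges e)%:R : R[i]) != 0.
  by rewrite pnatr_eq0 -lt0n muln_gt0 (nedges_gt0 eirr esym exy).
have deg_ptrans x : deg e x = deg (ptrans e) x.
  apply/eqP; rewrite -(eqr_nat R[i]) -subr_eq0.
  move: (separable_ptrans_row_sum0 rho_sep (density_sum0 R[i] p q e) x).
  rewrite density_ptrans_row_sum => /eqP.
  by rewrite mulf_eq0 invr_eq0 (negbTE c_neq0) orFb.
apply: functional_extensionality => x; apply: functional_extensionality => y.
by rewrite /degm deg_ptrans.
Qed.
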